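(* Let $K^n$ ($n\ge3$) be a finite $n$-dimensional pseudomanifold with a reflection $\vartheta$ and associated subcomplexes $K_+,K_-,K_0$, and let $\kappa>0$. If $\underline{w}_\pm\in\mathfrak{C}_\kappa(K_\pm)$ with $\pi_0\underline{w}_+=\pi_0\underline{w}_-$, then the assignment $\underline{w}$ on the edges of $K^n$ that agrees with $\underline{w}_+$ on edges of $K_+$ and with $\underline{w}_-$ on edges of $K_-$ lies in $\mathfrak{C}_\kappa(K^n)$. Moreover $\pi_0$ maps $\mathfrak{C}_\kappa(K^n)$ into $\mathfrak{C}_\kappa(K_0)$.
   Context: A finite simplicial complex is a finite vertex set with a family of nonempty subsets (simplexes) containing singletons and closed under nonempty subsets. An $n$-dimensional pseudomanifold: every simplex is a face of an $n$-simplex, every $(n-1)$-simplex is a face of at most two $n$-simplexes, any two $n$-simplexes are joined by a chain of $n$-simplexes with consecutive ones sharing an $(n-1)$-simplex. For a simplex $\sigma$ with vertices $0,\dots,k$ and edge values $z_{ij}>0$ ($z_{ii}=0$), $A(\underline{z}(\sigma))$ is the $k\times k$ matrix $a_{ij}=\tfrac12(z_{0i}+z_{0j}-z_{ij})$. A reflection is an involutive simplicial automorphism $\vartheta\neq\mathrm{id}$ of $K^n$ with subcomplexes $K_\pm$ that are $n$-dimensional pseudomanifolds, $K_-=\vartheta K_+$, $K_0=K_+\cap K_-$ a nonempty $(n-1)$-dimensional pseudomanifold on which $\vartheta$ is the identity, and every simplex of $K^n$ lies in $K_+$ or $K_-$. $\pi_\pm,\pi_0$ denote restriction of an edge assignment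 to the edges of $K_\pm$, $K_0$; $\underline{z}_\pm=\pi_\pm\underline{z}$; $\|\cdot\|$ is the Euclidean norm. The cut-off set for $K^n$ is $\mathfrak{C}_\kappa(K^n)=\{\underline{z}:\det A(\underline{z}(\sigma))\ge1/\kappa\text{ for all }\sigma\in K^n\text{ with }1\le\dim\sigma\le n,\ \max(\|\underline{z}_+\|,\|\underline{z}_-\|)\le\kappa\}$; for $L\in\{K_+,K_-,K_0\}$ of dimension $m$, $\mathfrak{C}_\kappa(L)=\{\underline{w}:\det A(\underline{w}(\sigma))\ge1/\kappa\text{ for all }\sigma\in L,\ 1\le\dim\sigma\le m,\ \|\underline{w}\|\le\kappa\}$. *)

From HB Require Import structures.
From mathcomp Require Import all_boot all_order all_algebra.
From mathcomp Require Import reals.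
Set Implicit Arguments. Unset Strict Implicit. Unset Printing Implicit Defensive.
Import Order.TTheory GRing.Theory Num.Theory.
Section Defs.
Variable V : finType.

(* A (finite) simplicial complex is a set of simplices (nonempty vertex sets)
   closed under nonempty subsets. dim sigma = #|sigma| - 1. *)
Definition simplicial_complex (K : {set {set V}}) : Prop :=
  set0 \notin K /\
  forall s t : {set V}, s \in K -> t \subset s -> t != set0 -> t \in K.

Definition adj_nsimp (K : {set {set V}}) (n : nat) : rel {set V} :=
  fun t t' => [&& t \in K, t' \in K, #|t| == n.+1, #|t'| == n.+1 &
                  n <= #|t :&: t'|].

Definition pseudomanifold (n : nat) (K : {set {set V}}) : Prop :=
  simplicial_complex K /\
  (forall s, s \in K -> exists2 t, t \in K & (#|t| == n.+1) && (s \subset t)) /\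
  (forall r, r \in K -> #|r| = n ->
     (#|[set t in K | (#|t| == n.+1) && (r \subset t)]| <= 2)%N) /\
  (forall t t', t \in K -> t' \in K -> #|t| = n.+1 -> #|t'| = n.+1 ->
     connect (adj_nsimp K n) t t').

(* A reflection theta of K (vertex set of K taken to be all of V) with
   subcomplexes Kp = K_+, Km = K_-, K0 = K_0 = Kp :&: Km. *)
Definition reflection (n : nat) (K : {set {set V}}) (theta : V -> V)
    (Kp Km : {set {set V}}) : Prop :=
  (forall v : V, [set v] \in K) /\
  (forall v, theta (theta v) = v) /\
  (forall s, (s \in K) = (theta @: s \in K)) /\
  (exists v, theta v != v) /\
  Kp \subset K /\ Km \subset K /\
  pseudomanifold n Kp /\ pseudomanifold n Km /\
  Km = (fun s : {set V} => theta @: s) @: Kp /\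
  Kp :&: Km != set0 /\
  pseudomanifold n.-1 (Kp :&: Km) /\
  (forall s, s \in Kp :&: Km -> forall v, v \in s -> theta v = v) /\
  K \subset Kp :|: Km.

Variable R : realType.
Local Open Scope ring_scope.

(* Edge assignments are functions on vertex sets; only values on the
   edges (2-element simplices) of the relevant complex matter. *)
Definition ezz (z : {set V} -> R) (u v : V) : R :=
  if u == v then 0 else z [set u; v].

(* A(z(sigma)) for sigma with vertices v0 :: s (k = size s). *)
Definition Amx (z : {set V} -> R) (v0 : V) (s : seq V) : 'M[R]_(size s) :=
  \matrix_(i, j) (2^-1 * (ezz z v0 (nth v0 s i) + ezz z v0 (nth v0 s j)
                          - ezz z (nth v0 s i) (nth v0 s j))).

Definition detA (z : {set V} -> R) (sigma : {set V}) : R :=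
  match enum sigma with
  | v0 :: s => \det (Amx z v0 s)
  | [::] => 1
  end.

Definition enorm (L : {set {set V}}) (z : {set V} -> R) : R :=
  Num.sqrt (\sum_(e in L | #|e| == 2%N) z e ^+ 2).

Definition restr (L : {set {set V}}) (z : {set V} -> R) : {set V} -> R :=
  fun e => if (e \in L) && (#|e| == 2%N) then z e else 0.

Definition cutoff (L : {set {set V}}) (m : nat) (kappa : R) (w : {set V} -> R)
  : Prop :=
  (forall sigma, sigma \in L -> (2 <= #|sigma| <= m.+1)%N ->
     1 / kappa <= detA w sigma) /\
  enorm L w <= kappa.

Definition cutoffK (K Kp Km : {set {set V}}) (n : nat) (kappa : R)
    (z : {set V} -> R) : Prop :=
  (forall sigma, sigma \in K -> (2 <= #|sigma| <= n.+1)%N ->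
     1 / kappa <= detA z sigma) /\
  Num.max (enorm Kp (restr Kp z)) (enorm Km (restr Km z)) <= kappa.

End Defs.

From HB Require Import structures.
From mathcomp Require Import all_boot all_order all_algebra.
From mathcomp Require Import reals.
Set Implicit Arguments. Unset Strict Implicit. Unset Printing Implicit Defensive.
Import Order.TTheory GRing.Theory Num.Theory.
Local Open Scope ring_scope.

(* Both cut-off conditions only look at an assignment on edges. The
   determinant of a simplex involves only its own edges, which all lie in
   whichever of K_+, K_- contains the simplex (K = K_+ ∪ K_-), so the glued
   assignment inherits the bound from w_+ or w_-. Restricting to K_0 ⊆ K_+
   keeps the determinants and can only shrink the norm, a partial sum of
   squares. *)

Section EdgeAssignments.
Variables (V : finType) (R : realType).
Implicit Types (L : {set {set V}}) (z : {set V} -> R).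

Definition edge_agree L z1 z2 : Prop :=
  forall e, e \in L -> #|e| = 2%N -> z1 e = z2 e.

Lemma edge_agree_restr {L L'} z : L \subset L' -> edge_agree L (restr L' z) z.
Proof. by move=> /subsetP sL e /sL He He2; rewrite /restr He He2 eqxx. Qed.

Lemma simplicial_complex_edge {L sigma u v} :
  simplicial_complex L -> sigma \in L -> u \in sigma -> v \in sigma ->
  [set u; v] \in L.
Proof.
move=> [_ closedL] Hs Hu Hv; apply: (closedL _ _ Hs).
  by apply/subsetP => x; rewrite !inE => /orP [] /eqP ->.
by apply/set0Pn; exists u; rewrite !inE eqxx.
Qed.

Lemma detA_edge_agree {L z1 z2 sigma} :
  simplicial_complex L -> sigma \in L -> edge_agree L z1 z2 ->
  detA z1 sigma = detA z2 sigma.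
Proof.
move=> scL Hs E; rewrite /detA.
have mem_sigma x : x \in enum sigma -> x \in sigma by rewrite mem_enum.
case: (enum sigma) mem_sigma => [//|v0 s] mem_sigma.
have ezzE a b : a \in sigma -> b \in sigma -> ezz z1 a b = ezz z2 a b.
  move=> Ha Hb; rewrite /ezz; case: eqP => // /eqP ab.
  by apply: E; [exact: simplicial_complex_edge Hs Ha Hb | rewrite cards2 ab].
have v0_in : v0 \in sigma by apply: mem_sigma; rewrite inE eqxx.
have nth_in (i : 'I_(size s)) : nth v0 s i \in sigma.
  by apply: mem_sigma; rewrite inE mem_nth ?orbT.
by congr (\det _); apply/matrixP => i j; rewrite !mxE !ezzE ?nth_in.
Qed.

Lemma enorm_edge_agree {L z1 z2} : edge_agree L z1 z2 -> enorm L z1 = enorm L z2.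
Proof.
by move=> E; congr Num.sqrt; apply: eq_bigr => e /andP [He /eqP He2]; rewrite E.
Qed.

Lemma enorm_subset {L1 L2} z : L1 \subset L2 -> enorm L1 z <= enorm L2 z.
Proof.
move=> /subsetP sL; apply: ler_wsqrtr.
rewrite [leLHS]big_mkcond [leRHS]big_mkcond /=; apply: ler_sum => e _.
case He1: (e \in L1); first by rewrite (sL _ He1).
by case: ifP => // _; rewrite sqr_ge0.
Qed.

Lemma cutoff_edge_agree {L m kappa z1 z2} :
  simplicial_complex L -> edge_agree L z1 z2 ->
  cutoff L m kappa z1 -> cutoff L m kappa z2.
Proof.
move=> scL E [det1 norm1]; split; last by rewrite -(enorm_edge_agree E).
by move=> sigma Hs Hc; rewrite -(detA_edge_agree scL Hs E); apply: det1.
Qed.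

Lemma enorm_restr L z : enorm L (restr L z) = enorm L z.
Proof. exact/enorm_edge_agree/edge_agree_restr. Qed.

End EdgeAssignments.

Theorem lemmaA2 (V : finType) (R : realType) (n : nat)
    (K Kp Km : {set {set V}}) (theta : V -> V) (kappa : R) :
  (3 <= n)%N ->
  pseudomanifold n K ->
  reflection n K theta Kp Km ->
  0 < kappa ->
  (forall wp wm : {set V} -> R,
     cutoff Kp n kappa (restr Kp wp) ->
     cutoff Km n kappa (restr Km wm) ->
     restr (Kp :&: Km) wp = restr (Kp :&: Km) wm ->
     forall w : {set V} -> R,
       (forall e, e \in Kp -> #|e| = 2%N -> w e = wp e) ->
       (forall e, e \in Km -> #|e| = 2%N -> w e = wm e) ->
       cutoffK K Kp Km n kappa (restr K w)) /\
  (forall z : {set V} -> R,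
     cutoffK K Kp Km n kappa (restr K z) ->
     cutoff (Kp :&: Km) n.-1 kappa (restr (Kp :&: Km) z)).
Proof.
move=> _ _ [_ [_ [_ [_ [sKp [sKm [[scp _] [[scm _] [_ [_ [[sc0 _] [_ sK]]]]]]]]]]]] _.
have s0K : Kp :&: Km \subset K by apply: subset_trans (subsetIl _ _) sKp.
split=> [wp wm cutp cutm _ w Ep Em | z [detz normz]].
- have agree_p : edge_agree Kp (restr Kp wp) (restr K w).
    move=> e He He2.
    by rewrite (edge_agree_restr _ (subxx _)) // (edge_agree_restr _ sKp) // Ep.
  have agree_m : edge_agree Km (restr Km wm) (restr K w).
    move=> e He He2.
    by rewrite (edge_agree_restr _ (subxx _)) // (edge_agree_restr _ sKm) // Em.
  have [detp normp] := cutoff_edge_agree scp agree_p cutp.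
  have [detm normm] := cutoff_edge_agree scm agree_m cutm.
  split; last by rewrite ge_max !enorm_restr normp.
  move=> sigma /(subsetP sK); rewrite inE => /orP [] Hs.
  + exact: detp.
  + exact: detm.
- have agree0 : edge_agree (Kp :&: Km) (restr K z) (restr (Kp :&: Km) z).
    move=> e He He2.
    by rewrite (edge_agree_restr _ s0K) // (edge_agree_restr _ (subxx _)).
  apply: (cutoff_edge_agree sc0 agree0); split=> [sigma Hs /andP [H2 Hn] | ].
    apply: detz; first exact: (subsetP s0K).
    by rewrite H2 (leq_trans Hn) // ltnS leq_pred.
  by apply: le_trans normz; rewrite le_max enorm_restr enorm_subset ?subsetIl.
Qed.
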